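(* Let $(\Lambda,d)$ be a $k$-graph and let $\sim$ be an equivalence relation on (the set of morphisms of) $\Lambda$ with the following properties: (1) if $\mu \sim \nu$ then $d(\mu) = d(\nu)$; (2) if $\alpha \sim \alpha'$ and $\beta \sim \beta'$ with $r(\beta) = s(\alpha)$ and $r(\beta') = s(\alpha')$, then $\alpha\beta \sim \alpha'\beta'$; (3) if $\alpha\beta \sim \alpha'\beta'$ (both composable pairs) and $d(\alpha) = d(\alpha')$, then $\alpha \sim \alpha'$ and $\beta \sim \beta'$; (4) if $s(\alpha) \sim r(\beta)$, then there exist $\alpha', \beta'$ such that $\alpha' \sim \alpha$, $\beta'\sim\beta$ and $s(\alpha') = r(\beta')$. Then the formulas $d([\mu]) = d(\mu)$, $r([\mu]) = [r(\mu)]$, $s([\mu]) = [s(\mu)]$, and $[\lambda][\mu] = [\alpha\beta]$ (for any $\alpha\in[\lambda]$, $\beta\in[\mu]$ with $s(\alpha)=r(\beta)$, whenever $[s(\lambda)]=[r(\mu)]$) are well defined, and with these structure maps the quotient $\Lambda/{\sim}$ is a $k$-graph.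
   Context: For $k\ge 0$, $\mathbb{N}^k$ is the additive monoid with generators $e_1,\dots,e_k$ ($\mathbb{N}^0=\{0\}$). A $k$-graph is a countable small category $\Lambda$ together with a functor $d:\Lambda\to\mathbb{N}^k$ (the degree map) satisfying the factorisation property: writing $\Lambda^n=d^{-1}(n)$, for all $m,n\in\mathbb{N}^k$ the composition map $(\mu,\nu)\mapsto\mu\nu$ is a bijection from $\{(\mu,\nu)\in\Lambda^m\times\Lambda^n : s(\mu)=r(\nu)\}$ onto $\Lambda^{m+n}$. Objects are identified with their identity morphisms, so $\Lambda^0$ is the set of vertices, and $r,s:\Lambda\to\Lambda^0$ are the range (codomain) and source (domain) maps. $k$-graphs are assumed nonempty. $[\lambda]$ denotes the $\sim$-equivalence class of $\lambda$. *)

From mathcomp Require Import all_boot.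
Set Implicit Arguments. Unset Strict Implicit. Unset Printing Implicit Defensive.

Definition Nk (k : nat) := {ffun 'I_k -> nat}.
Definition Nk_add (k : nat) (m n : Nk k) : Nk k := [ffun i => m i + n i].
Definition Nk_zero (k : nat) : Nk k := [ffun _ => 0].

(* A k-graph, presented "arrows only": M is the set of morphisms, objects are
   identified with identity morphisms (the v with r v = v), r/s are range and
   source (as morphisms), comp f g = f g is composition (meaningful when
   s f = r g), and d is the degree functor. *)
Definition is_kgraph (k : nat) (M : Type) (r s : M -> M) (comp : M -> M -> M)
    (d : M -> Nk k) : Prop :=
  (exists f : M -> nat, injective f) /\ inhabited M /\
  (forall f, r (r f) = r f /\ s (r f) = r f /\ r (s f) = s f /\ s (s f) = s f) /\
  (forall f g, s f = r g -> r (comp f g) = r f /\ s (comp f g) = s g) /\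
  (forall f, comp (r f) f = f /\ comp f (s f) = f) /\
  (forall f g h, s f = r g -> s g = r h -> comp (comp f g) h = comp f (comp g h)) /\
  (forall f, d (r f) = Nk_zero k) /\
  (forall f g, s f = r g -> d (comp f g) = Nk_add (d f) (d g)) /\
  (forall (m n : Nk k) (l : M), d l = Nk_add m n ->
     exists mu nu, (d mu = m /\ d nu = n /\ s mu = r nu /\ comp mu nu = l) /\
       forall mu' nu', d mu' = m -> d nu' = n -> s mu' = r nu' -> comp mu' nu' = l ->
         mu' = mu /\ nu' = nu).

From mathcomp Require Import all_boot.
From Stdlib Require Import ClassicalEpsilon.

Set Implicit Arguments.
Unset Strict Implicit.
Unset Printing Implicit Defensive.

(* Conditions (1) and (3) (applied to f = r f . f and f = f . s f) show that
   r and s preserve ~, so range, source and degree descend to Q through a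
   chosen representative of each class.  Condition (4) provides composable
   representatives of two classes with [s l] = [r mu]; composition on Q picks
   such a pair by Hilbert's epsilon, and condition (2) shows that the result
   does not depend on the pair.  Every k-graph axiom on Q is then checked on
   composable representatives: category laws and functoriality of the degree
   are inherited directly, associativity uses (3) and the factorisation
   property of the original graph to realign a composable triple, and the
   uniqueness of factorisations in Q is exactly condition (3). *)

Section Quotient.

Variables (k : nat) (M : Type) (r s : M -> M) (comp : M -> M -> M)
  (d : M -> Nk k) (eqv : M -> M -> Prop).

Hypothesis graph : is_kgraph r s comp d.
Hypothesis eqv_sym : forall x y, eqv x y -> eqv y x.
Hypothesis eqv_trans : forall x y z, eqv x y -> eqv y z -> eqv x z.
Hypothesis eqv_degree : forall mu nu, eqv mu nu -> d mu = d nu.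
Hypothesis eqv_comp : forall a a' b b', eqv a a' -> eqv b b' ->
  r b = s a -> r b' = s a' -> eqv (comp a b) (comp a' b').
Hypothesis eqv_cancel : forall a a' b b', s a = r b -> s a' = r b' ->
  eqv (comp a b) (comp a' b') -> d a = d a' -> eqv a a' /\ eqv b b'.
Hypothesis eqv_align : forall a b, eqv (s a) (r b) ->
  exists a' b', eqv a' a /\ eqv b' b /\ s a' = r b'.

Variables (Q : Type) (q : M -> Q).
Hypothesis q_surj : forall y : Q, exists x, q x = y.
Hypothesis q_eq : forall x y, q x = q y <-> eqv x y.

Lemma countable_morphisms : exists f : M -> nat, injective f.
Proof. by case: graph. Qed.

Lemma inhabited_morphisms : inhabited M.
Proof. by case: graph => _ [inh _]. Qed.

Lemma identity_laws f :
  r (r f) = r f /\ s (r f) = r f /\ r (s f) = s f /\ s (s f) = s f.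
Proof. by case: graph => _ [_ [ids _]]. Qed.

Lemma comp_range_source f g :
  s f = r g -> r (comp f g) = r f /\ s (comp f g) = s g.
Proof. by case: graph => _ [_ [_ [rs _]]]; apply: rs. Qed.

Lemma comp_unit f : comp (r f) f = f /\ comp f (s f) = f.
Proof. by case: graph => _ [_ [_ [_ [unit _]]]]. Qed.

Lemma comp_assoc f g h :
  s f = r g -> s g = r h -> comp (comp f g) h = comp f (comp g h).
Proof. by case: graph => _ [_ [_ [_ [_ [assoc _]]]]]; apply: assoc. Qed.

Lemma degree_range f : d (r f) = Nk_zero k.
Proof. by case: graph => _ [_ [_ [_ [_ [_ [dr _]]]]]]. Qed.

Lemma degree_comp f g : s f = r g -> d (comp f g) = Nk_add (d f) (d g).
Proof. by case: graph => _ [_ [_ [_ [_ [_ [_ [dc _]]]]]]]; apply: dc. Qed.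

Lemma factorisation (m n : Nk k) (l : M) : d l = Nk_add m n ->
  exists mu nu, d mu = m /\ d nu = n /\ s mu = r nu /\ comp mu nu = l.
Proof.
case: graph => _ [_ [_ [_ [_ [_ [_ [_ fact]]]]]]] /fact [mu [nu [spec _]]].
by exists mu, nu.
Qed.

(* Range and source preserve ~: factor f as r f . f and f . s f and cancel
   the factor of equal degree with (3). *)

Lemma eqv_range x y : eqv x y -> eqv (r x) (r y).
Proof.
move=> exy; have [_ [srx _]] := identity_laws x; have [_ [sry _]] := identity_laws y.
have := eqv_cancel srx sry; rewrite (comp_unit x).1 (comp_unit y).1.
by move=> /(_ exy); rewrite !degree_range => /(_ erefl) [].
Qed.

Lemma eqv_source x y : eqv x y -> eqv (s x) (s y).
Proof.
move=> exy; have [_ [_ [rsx _]]] := identity_laws x.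
have [_ [_ [rsy _]]] := identity_laws y.
have := eqv_cancel (esym rsx) (esym rsy); rewrite (comp_unit x).2 (comp_unit y).2.
by move=> /(_ exy (eqv_degree exy)) [].
Qed.

Lemma composable_reps l mu : q (s l) = q (r mu) ->
  exists a b, eqv a l /\ eqv b mu /\ s a = r b.
Proof. by move=> /q_eq /eqv_align. Qed.

Lemma eqv_refl x : eqv x x.
Proof. exact/q_eq. Qed.

Definition rep (y : Q) : M := proj1_sig (constructive_indefinite_description _ (q_surj y)).

Lemma q_rep y : q (rep y) = y.
Proof. by rewrite /rep; case: constructive_indefinite_description. Qed.

Lemma rep_q x : eqv (rep (q x)) x.
Proof. by apply/q_eq; rewrite q_rep. Qed.

Definition rQ (y : Q) : Q := q (r (rep y)).
Definition sQ (y : Q) : Q := q (s (rep y)).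
Definition dQ (y : Q) : Nk k := d (rep y).

Lemma rQ_q x : rQ (q x) = q (r x).
Proof. exact/q_eq/eqv_range/rep_q. Qed.

Lemma sQ_q x : sQ (q x) = q (s x).
Proof. exact/q_eq/eqv_source/rep_q. Qed.

Lemma dQ_q x : dQ (q x) = d x.
Proof. exact/eqv_degree/rep_q. Qed.

Definition composable_pair (y z : Q) (p : M * M) : Prop :=
  eqv p.1 (rep y) /\ eqv p.2 (rep z) /\ s p.1 = r p.2.

Lemma inhabited_pairs : inhabited (M * M).
Proof. by case: inhabited_morphisms => m; exact: inhabits (m, m). Qed.

Definition compQ (y z : Q) : Q :=
  let p := epsilon inhabited_pairs (composable_pair y z) in q (comp p.1 p.2).

(* By (2), composition of classes may be computed on any composable pair. *)
Lemma compQ_reps l mu a b : eqv a l -> eqv b mu -> s a = r b ->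
  compQ (q l) (q mu) = q (comp a b).
Proof.
move=> al bmu sab.
have ex : exists p, composable_pair (q l) (q mu) p.
  exists (a, b); split; first exact: eqv_trans al (eqv_sym (rep_q l)).
  by split => //; exact: eqv_trans bmu (eqv_sym (rep_q mu)).
rewrite /compQ; have := epsilon_spec inhabited_pairs _ ex.
case: (epsilon _ _) => a0 b0 [/= a0l [/= b0mu sab0]].
apply/q_eq/eqv_comp => //.
- exact: eqv_trans a0l (eqv_trans (rep_q l) (eqv_sym al)).
- exact: eqv_trans b0mu (eqv_trans (rep_q mu) (eqv_sym bmu)).
Qed.

Lemma compQ_q a b : s a = r b -> compQ (q a) (q b) = q (comp a b).
Proof. exact/compQ_reps/eqv_refl/eqv_refl. Qed.

Lemma composable_lift y z : sQ y = rQ z ->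
  exists a b, y = q a /\ z = q b /\ s a = r b.
Proof.
case: (q_surj y) => f <-; case: (q_surj z) => g <-.
rewrite sQ_q rQ_q => /composable_reps [a [b [af [bg sab]]]].
by exists a, b; split; [|split] => //; apply/q_eq/eqv_sym.
Qed.

(* A composable triple of the quotient lifts to a composable triple of M:
   align b with c by (4), then factor the new representative of ab by degrees
   and identify the factors with a and b by (3). *)
Lemma composable_triple_lift a b c : s a = r b -> q (s b) = q (r c) ->
  exists a2 b2 c2, eqv a2 a /\ eqv b2 b /\ eqv c2 c /\
    s a2 = r b2 /\ s b2 = r c2.
Proof.
move=> sab /q_eq sbc.
have /eqv_align [x [c2 [xab [c2c sxc2]]]] : eqv (s (comp a b)) (r c).
  by rewrite (comp_range_source sab).2.
have [a2 [b2 [da2 [_ [sab2 e2]]]]] :=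
  factorisation (etrans (eqv_degree xab) (degree_comp sab)).
have /eqv_cancel : eqv (comp a2 b2) (comp a b) by rewrite e2.
move=> /(_ sab2 sab da2) [a2a b2b].
exists a2, b2, c2; do 4![split => //].
by rewrite -sxc2 -e2 (comp_range_source sab2).2.
Qed.

Lemma quotient_countable : exists f : Q -> nat, injective f.
Proof.
case: countable_morphisms => fc fc_inj; exists (fun y => fc (rep y)) => y1 y2 /fc_inj e.
by rewrite -(q_rep y1) -(q_rep y2) e.
Qed.

Lemma quotient_identity_laws y :
  rQ (rQ y) = rQ y /\ sQ (rQ y) = rQ y /\ rQ (sQ y) = sQ y /\ sQ (sQ y) = sQ y.
Proof.
case: (q_surj y) => f <-; rewrite !(rQ_q, sQ_q).
by have [-> [-> [-> ->]]] := identity_laws f.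
Qed.

Lemma quotient_comp_range_source y z :
  sQ y = rQ z -> rQ (compQ y z) = rQ y /\ sQ (compQ y z) = sQ z.
Proof.
move=> /composable_lift [a [b [-> [-> sab]]]].
by rewrite compQ_q // !(rQ_q, sQ_q); have [-> ->] := comp_range_source sab.
Qed.

Lemma quotient_comp_unit y : compQ (rQ y) y = y /\ compQ y (sQ y) = y.
Proof.
case: (q_surj y) => f <-; have [_ [srf [rsf _]]] := identity_laws f.
by rewrite rQ_q sQ_q !compQ_q // (comp_unit f).1 (comp_unit f).2.
Qed.

Lemma quotient_comp_assoc y z w : sQ y = rQ z -> sQ z = rQ w ->
  compQ (compQ y z) w = compQ y (compQ z w).
Proof.
move=> /composable_lift [a [b [-> [-> sab]]]].
case: (q_surj w) => c <-; rewrite sQ_q rQ_q => sbc.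
have [a2 [b2 [c2 [a2a [b2b [c2c [sab2 sbc2]]]]]]] := composable_triple_lift sab sbc.
rewrite -(proj2 (q_eq _ _) a2a) -(proj2 (q_eq _ _) b2b) -(proj2 (q_eq _ _) c2c).
have [rbc _] := comp_range_source sbc2; have [_ sab'] := comp_range_source sab2.
by rewrite !compQ_q ?rbc ?sab' // comp_assoc.
Qed.

Lemma quotient_degree_range y : dQ (rQ y) = Nk_zero k.
Proof. by case: (q_surj y) => f <-; rewrite rQ_q dQ_q degree_range. Qed.

Lemma quotient_degree_comp y z :
  sQ y = rQ z -> dQ (compQ y z) = Nk_add (dQ y) (dQ z).
Proof.
by move=> /composable_lift [a [b [-> [-> sab]]]]; rewrite compQ_q // !dQ_q degree_comp.
Qed.

(* Existence of factorisations descends from M; uniqueness is condition (3). *)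
Lemma quotient_factorisation (m n : Nk k) (y : Q) : dQ y = Nk_add m n ->
  exists mu nu, (dQ mu = m /\ dQ nu = n /\ sQ mu = rQ nu /\ compQ mu nu = y) /\
    forall mu' nu', dQ mu' = m -> dQ nu' = n -> sQ mu' = rQ nu' -> compQ mu' nu' = y ->
      mu' = mu /\ nu' = nu.
Proof.
case: (q_surj y) => l <-; rewrite dQ_q => /factorisation [mu [nu [dmu [dnu [smn e]]]]].
exists (q mu), (q nu); split; first by rewrite !dQ_q sQ_q rQ_q compQ_q // e smn.
move=> mu' nu' + + /composable_lift [a [b [E1 [E2 sab]]]]; subst mu' nu'.
rewrite !dQ_q compQ_q // -e => da db /q_eq ab.
have [amu bnu] := eqv_cancel sab smn ab (etrans da (esym dmu)).
by split; apply/q_eq.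
Qed.

Lemma quotient_is_kgraph : is_kgraph rQ sQ compQ dQ.
Proof.
split; first exact: quotient_countable.
split; first by case: inhabited_morphisms => m; exact: inhabits (q m).
split; first exact: quotient_identity_laws.
split; first exact: quotient_comp_range_source.
split; first exact: quotient_comp_unit.
split; first exact: quotient_comp_assoc.
split; first exact: quotient_degree_range.
split; first exact: quotient_degree_comp.
exact: quotient_factorisation.
Qed.

End Quotient.

Theorem proposition2p1 (k : nat) (M : Type) (r s : M -> M) (comp : M -> M -> M)
    (d : M -> Nk k) (eqv : M -> M -> Prop) :
  is_kgraph r s comp d ->
  (forall x, eqv x x) -> (forall x y, eqv x y -> eqv y x) ->
  (forall x y z, eqv x y -> eqv y z -> eqv x z) ->
  (* (1) *) (forall mu nu, eqv mu nu -> d mu = d nu) ->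
  (* (2) *) (forall a a' b b', eqv a a' -> eqv b b' -> r b = s a -> r b' = s a' ->
               eqv (comp a b) (comp a' b')) ->
  (* (3) *) (forall a a' b b', s a = r b -> s a' = r b' -> eqv (comp a b) (comp a' b') ->
               d a = d a' -> eqv a a' /\ eqv b b') ->
  (* (4) *) (forall a b, eqv (s a) (r b) ->
               exists a' b', eqv a' a /\ eqv b' b /\ s a' = r b') ->
  (* for any realisation Q of the quotient Lambda/~ with class map q *)
  forall (Q : Type) (q : M -> Q),
    (forall y : Q, exists x, q x = y) ->
    (forall x y, q x = q y <-> eqv x y) ->
    (* composable representatives exist whenever [s(l)] = [r(mu)] *)
    (forall l mu, q (s l) = q (r mu) ->
       exists a b, eqv a l /\ eqv b mu /\ s a = r b) /\
    exists (rQ sQ : Q -> Q) (compQ : Q -> Q -> Q) (dQ : Q -> Nk k),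
      (forall mu, dQ (q mu) = d mu) /\
      (forall mu, rQ (q mu) = q (r mu)) /\
      (forall mu, sQ (q mu) = q (s mu)) /\
      (forall l mu a b, q (s l) = q (r mu) -> eqv a l -> eqv b mu -> s a = r b ->
         compQ (q l) (q mu) = q (comp a b)) /\
      is_kgraph rQ sQ compQ dQ.
Proof.
move=> graph _ sym trans deg cmp cancel align Q q surj q_eq.
split; first exact: (composable_reps align q_eq).
exists (rQ r surj), (sQ s surj), (compQ eqv graph surj), (dQ d surj).
split; first exact: (dQ_q deg surj q_eq).
split; first exact: (rQ_q graph cancel surj q_eq).
split; first exact: (sQ_q graph deg cancel surj q_eq).
split; first by move=> l mu a b _; exact: (compQ_reps graph sym trans cmp surj q_eq).
exact: (quotient_is_kgraph graph sym trans deg cmp cancel align surj q_eq).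
Qed.
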